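(* For every connected graph $G$ of order $n\geq 2$, $\mathrm{ldim}_f(G)\leq \frac{n}{2}$.
   Context: All graphs are finite, simple and connected; $d$ is the shortest-path distance. For an edge $uv$, $L(uv)=\{x\in V(G): d(u,x)\neq d(v,x)\}$. A function $f:V(G)\to[0,1]$ is a local resolving function of $G$ if $\sum_{x\in L(uv)}f(x)\geq 1$ for every edge $uv$; $\mathrm{ldim}_f(G)$ is the minimum of $\sum_{v}f(v)$ over all local resolving functions. *)

From HB Require Import structures.
From mathcomp Require Import all_boot all_order all_algebra.
Set Implicit Arguments. Unset Strict Implicit. Unset Printing Implicit Defensive.
Import Order.TTheory GRing.Theory Num.Theory.

Definition simple_graph (T : finType) (e : rel T) : Prop :=
  symmetric e /\ irreflexive e.

Definition connected_graph (T : finType) (e : rel T) : Prop :=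
  forall u v : T, connect e u v.

Definition walk_of_len (T : finType) (e : rel T) (u v : T) (k : nat) : bool :=
  [exists p : k.-tuple T, path e u p && (last u p == v)].

(* Shortest-path distance: least k such that a walk of length k from u to v
   exists (shortest walks are paths). For connected graphs such a k < #|T|
   always exists; otherwise the value is #|T| (irrelevant here). *)
Definition dist (T : finType) (e : rel T) (u v : T) : nat :=
  find (walk_of_len e u v) (iota 0 #|T|).

Definition Lset (T : finType) (e : rel T) (u v : T) : {set T} :=
  [set x | dist e u x != dist e v x].

Definition local_resolving_fun (R : realFieldType) (T : finType) (e : rel T)
    (f : T -> R) : Prop :=
  (forall x, 0 <= f x <= 1)%R /\
  (forall u v, e u v -> (1 <= \sum_(x in Lset e u v) f x)%R).

(* ldim_f(G) <= c, i.e. the minimum weight of a local resolving function is at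
   most c (the minimum is attained, being an LP optimum). *)
Definition ldimf_le (R : realFieldType) (T : finType) (e : rel T) (c : R) : Prop :=
  exists f : T -> R, local_resolving_fun e f /\ (\sum_x f x <= c)%R.

(* The constant function 1/2 is a local resolving function: the endpoints u, v
   of an edge are at distance 0 from themselves and at positive distance from
   each other, so both lie in L(uv) and every L(uv) carries weight at least 1. *)
From HB Require Import structures.
From mathcomp Require Import all_boot all_order all_algebra.
From mathcomp Require Import lra.
Import Order.TTheory GRing.Theory Num.Theory.
Local Open Scope ring_scope.

Lemma dist_eq0 (T : finType) (e : rel T) (u v : T) :
  (dist e u v == 0)%N = (u == v).
Proof.
have : (0 < #|T|)%N by apply/card_gt0P; exists u.
rewrite /dist; case: #|T| => // n _ /=.
have -> : walk_of_len e u v 0 = (u == v).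
  apply/existsP/idP => [[p]|/eqP <-]; last by exists [tuple]; rewrite /= eqxx.
  by rewrite (tuple0 p).
by case: (u == v).
Qed.

Lemma Lset_sym (T : finType) (e : rel T) (u v : T) : Lset e u v = Lset e v u.
Proof. by apply/setP => x; rewrite !inE eq_sym. Qed.

Lemma mem_Lset_l (T : finType) (e : rel T) (u v : T) :
  u != v -> u \in Lset e u v.
Proof.
move=> neq_uv; rewrite inE.
have /eqP -> : (dist e u u == 0)%N by rewrite dist_eq0.
by rewrite eq_sym dist_eq0 eq_sym.
Qed.

Lemma card_Lset_ge2 (T : finType) (e : rel T) (u v : T) :
  u != v -> (2 <= #|Lset e u v|)%N.
Proof.
move=> neq_uv; have := cards2 u v; rewrite neq_uv => <-.
apply/subset_leq_card/subsetP => x /set2P[] ->; first exact: mem_Lset_l.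
by rewrite Lset_sym mem_Lset_l // eq_sym.
Qed.

Lemma half_local_resolving (R : realFieldType) (T : finType) (e : rel T) :
  irreflexive e -> local_resolving_fun e (fun _ => 1 / 2 : R).
Proof.
move=> irr_e; split=> [_|u v e_uv]; first by apply/andP; split; lra.
have neq_uv : u != v by apply: contraTneq e_uv => ->; rewrite irr_e.
rewrite sumr_const -mulr_natr.
have : 2%:R <= #|Lset e u v|%:R :> R by rewrite ler_nat card_Lset_ge2.
lra.
Qed.

Theorem corollary2p9 (R : realFieldType) (T : finType) (e : rel T) :
  simple_graph e -> connected_graph e -> (2 <= #|T|)%N ->
  ldimf_le e ((#|T|%:R : R) / 2).
Proof.
move=> [_ irr_e] _ _; exists (fun _ => 1 / 2); split.
  exact: half_local_resolving.
by rewrite sumr_const -mulr_natr; lra.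
Qed.
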